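(* Let $\alpha,\beta\in\mathbb{C}$ with $\Re(\alpha)>-1$ and $\Re(\beta)>-1$, and let $t\in\mathbb{C}$. Then for all $z\in\mathbb{C}$ with $|z|<1$, $$\frac{\partial }{\partial z} {\rm B}_{n}^{(\alpha ,\beta )} (z,1)-\frac{t}{1+\alpha}\, {\rm B}_{n}^{(1+\alpha ,\beta )} (z,1)-\frac{t}{1+\beta}\, {\rm B}_{n}^{(\alpha ,1+\beta )} (z,1)=0 .$$
   Context: For $\lambda\in\mathbb{C}$ and an integer $m\ge 0$, $(\lambda)_m$ denotes the Pochhammer symbol: $(\lambda)_0=1$ and $(\lambda)_m=\lambda(\lambda+1)\cdots(\lambda+m-1)$ for $m\ge1$. For a fixed parameter $t\in\mathbb{C}$ and $\alpha,\beta\in\mathbb{C}$ with $\Re(\alpha)>-1$, $\Re(\beta)>-1$, define $${\rm B}_{n}^{(\alpha ,\beta )} (z,1)=\left[\sum _{m=0}^{\infty } \frac{\tfrac{1}{2} \left(z-1 \right)^{m} t^{m}}{m!\,(1+\alpha)_{m} } \right]\left[\sum _{m=0}^{\infty }\frac{\tfrac{1}{2} \left(z+1 \right)^{m} t^{m}}{m!\,(1+\beta)_{m} } \right]$$ (the index $n$ is nominal; the right-hand side does not depend on it). ${\rm B}_{n}^{(1+\alpha ,\beta)}(z,1)$ and ${\rm B}_{n}^{(\alpha ,1+\beta)}(z,1)$ denote the same function with $\alpha$ replaced by $1+\alpha$, respectively $\beta$ replaced by $1+\beta$. *)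

From Stdlib Require Import Reals Factorial.
From Coquelicot Require Export Coquelicot.
Open Scope C_scope.

Fixpoint poch (l : C) (m : nat) : C :=
  match m with
  | O => 1
  | S k => poch l k * (l + RtoC (INR k))
  end.

Definition CSeries (a : nat -> C) : C :=
  (Series (fun n => Re (a n)), Series (fun n => Im (a n))).

Definition Bterm (t a w : C) (m : nat) : C :=
  (/ 2) * Cpow w m * Cpow t m / (RtoC (INR (fact m)) * poch (1 + a) m).

(* B_n^{(alpha,beta)}(z,1); the index n is nominal and omitted. *)
Definition Bfun (t alpha beta z : C) : C :=
  CSeries (Bterm t alpha (z - 1)) * CSeries (Bterm t beta (z + 1)).

(* Each factor of B is a power series sum_m c_m(a) w^m in w = z -/+ 1, with
   c_m(a) = t^m / (2 m! (1+a)_m).  Since |(1+a)_m| >= Re(1+a)^m, the coefficients are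
   dominated by those of an exponential, so the series is entire and can be
   differentiated termwise; termwise differentiation rests on
   |(w+h)^(m+1) - w^(m+1) - (m+1) h w^m| <= |h|^2 (|w|+1)^(m+1) for |h| <= 1.
   From (1+a)_(m+1) = (1+a) (2+a)_m one gets (m+1) c_(m+1)(a) = t/(1+a) c_m(1+a), i.e. the
   derivative of the a-series is t/(1+a) times the (1+a)-series, and the product rule
   yields the identity. *)

From Stdlib Require Import Reals Lra Lia Factorial.
From Coquelicot Require Import Coquelicot.
Open Scope C_scope.

Lemma Re_sum_n (a : nat -> C) n : Re (sum_n a n) = sum_n (fun k => Re (a k)) n.
Proof.
  induction n as [|n IH].
  - now rewrite !sum_O.
  - rewrite !sum_Sn, <- IH. reflexivity.
Qed.

Lemma Im_sum_n (a : nat -> C) n : Im (sum_n a n) = sum_n (fun k => Im (a k)) n.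
Proof.
  induction n as [|n IH].
  - now rewrite !sum_O.
  - rewrite !sum_Sn, <- IH. reflexivity.
Qed.

Lemma CSeries_unique (a : nat -> C) (l : C) : is_series a l -> CSeries a = l.
Proof.
  intros Ha. destruct l as [x y].
  assert (Hball := proj1 (filterlim_locally _ _) Ha).
  unfold CSeries. f_equal; apply is_series_unique, filterlim_locally; intros eps;
    (eapply filter_imp; [|exact (Hball eps)]); intros n [Hx Hy].
  - rewrite <- Re_sum_n. exact Hx.
  - rewrite <- Im_sum_n. exact Hy.
Qed.

Lemma CSeries_ext (a b : nat -> C) : (forall m, a m = b m) -> CSeries a = CSeries b.
Proof. intros Hab. unfold CSeries. f_equal; apply Series_ext; intros m; now rewrite Hab. Qed.

Lemma is_series_C_ext (a b : nat -> C) (la lb : C) :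
  (forall m, a m = b m) -> la = lb -> is_series a la -> is_series b lb.
Proof. intros Hab <-. now apply is_series_ext. Qed.

Lemma is_series_norm_le {K : AbsRing} {V : NormedModule K} (a : nat -> V) (b : nat -> R) l L :
  (forall n, norm (a n) <= b n)%R -> is_series a l -> is_series b L -> (norm l <= L)%R.
Proof.
  intros Hab Ha Hb.
  apply (is_lim_seq_le (fun n => norm (sum_n a n)) (sum_n b) (norm l) L).
  - intros n. eapply Rle_trans; [apply norm_sum_n_m|]. now apply sum_n_m_le.
  - exact (filterlim_comp _ _ _ (sum_n a) norm _ _ _ Ha (filterlim_norm l)).
  - exact Hb.
Qed.

Lemma pow_succ_binomial_le (u : R) m :
  (0 <= u)%R -> (u ^ S m + INR (S m) * u ^ m <= (u + 1) ^ S m)%R.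
Proof.
  intros Hu. induction m as [|m IH].
  - simpl. lra.
  - rewrite S_INR. change ((u + 1) ^ S (S m))%R with ((u + 1) * (u + 1) ^ S m)%R.
    assert (0 <= u ^ S m)%R by (apply pow_le; lra).
    assert (0 <= INR (S m) * u ^ m)%R by (apply Rmult_le_pos; [apply pos_INR|apply pow_le; lra]).
    simpl pow in *. nra.
Qed.

Lemma Cmod_pow_succ_remainder_le (w h : C) m : (Cmod h <= 1)%R ->
  (Cmod ((w + h) ^ S m - w ^ S m - INR (S m) * h * w ^ m) <= Cmod h ^ 2 * (Cmod w + 1) ^ S m)%R.
Proof.
  intros Hh. set (u := Cmod w). set (s := Cmod h).
  assert (Hu : (0 <= u)%R) by apply Cmod_ge_0.
  assert (Hs : (0 <= s)%R) by apply Cmod_ge_0.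
  (* The invariant: s^2 times the part of the binomial expansion of (u + 1)^(m+1) of
     degree < m in u. *)
  assert (Htail : (Cmod ((w + h) ^ S m - w ^ S m - INR (S m) * h * w ^ m)
                   <= s ^ 2 * ((u + 1) ^ S m - u ^ S m - INR (S m) * u ^ m))%R).
  { induction m as [|m IH].
    - replace ((w + h) ^ 1 - w ^ 1 - INR 1 * h * w ^ 0) with (RtoC 0) by (simpl; ring).
      rewrite Cmod_0. simpl. lra.
    - replace ((w + h) ^ S (S m) - w ^ S (S m) - INR (S (S m)) * h * w ^ S m)
        with ((w + h) * ((w + h) ^ S m - w ^ S m - INR (S m) * h * w ^ m)
              + INR (S m) * h ^ 2 * w ^ m)
        by (rewrite (S_INR (S m)), RtoC_plus; simpl; ring).
      eapply Rle_trans; [apply Cmod_triangle|].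
      rewrite !Cmod_mult, Cmod_R, Rabs_pos_eq, !Cmod_pow by apply pos_INR. fold u s.
      assert (Hwh : (Cmod (w + h) <= u + 1)%R)
        by (eapply Rle_trans; [apply Cmod_triangle|]; unfold u, s in *; lra).
      pose proof (Cmod_ge_0 (w + h)).
      pose proof (Cmod_ge_0 ((w + h) ^ S m - w ^ S m - INR (S m) * h * w ^ m)) as Hq.
      revert IH Hq. generalize (Cmod ((w + h) ^ S m - w ^ S m - INR (S m) * h * w ^ m)).
      intros q IH Hq. rewrite !S_INR in *. simpl pow in *. nra. }
  pose proof (pow_succ_binomial_le u m Hu).
  assert (0 <= u ^ S m)%R by (apply pow_le; lra).
  assert (0 <= INR (S m) * u ^ m)%R by (apply Rmult_le_pos; [apply pos_INR|apply pow_le; lra]).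
  assert (0 <= s ^ 2)%R by (apply pow_le; lra).
  nra.
Qed.

Definition entire_coefs (c : nat -> C) : Prop :=
  forall r, (0 <= r)%R -> ex_series (fun m => Cmod (c m) * r ^ m)%R.

Definition psum (c : nat -> C) (w : C) : C := CSeries (fun m => c m * w ^ m).

Definition deriv_coef (c : nat -> C) (m : nat) : C := INR (S m) * c (S m).

Lemma is_series_psum c w : entire_coefs c -> is_series (fun m => c m * w ^ m) (psum c w).
Proof.
  intros Hc.
  destruct (@ex_series_le _ C_CompleteNormedModule (fun m => c m * w ^ m)
              (fun m => Cmod (c m) * Cmod w ^ m)%R) as [l Hl].
  - intros m. change norm with Cmod. now rewrite Cmod_mult, Cmod_pow.
  - apply Hc, Cmod_ge_0.
  - unfold psum. now rewrite (CSeries_unique _ _ Hl).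
Qed.

Lemma psum_scal k c w : entire_coefs c -> psum (fun m => k * c m) w = k * psum c w.
Proof.
  intros Hc. apply CSeries_unique.
  eapply is_series_ext; [|exact (is_series_scal_l k _ _ (is_series_psum c w Hc))].
  intros m. apply Cmult_assoc.
Qed.

Lemma entire_coefs_deriv c : entire_coefs c -> entire_coefs (deriv_coef c).
Proof.
  intros Hc r Hr.
  apply (@ex_series_le R_AbsRing R_CompleteNormedModule _
           (fun m => Cmod (c (S m)) * (r + 1) ^ S m)%R).
  - intros m. change norm with Rabs. unfold deriv_coef.
    rewrite Rabs_pos_eq by (apply Rmult_le_pos; [apply Cmod_ge_0|apply pow_le; lra]).
    rewrite Cmod_mult, Cmod_R, Rabs_pos_eq by apply pos_INR.
    pose proof (pow_succ_binomial_le r m Hr). pose proof (Cmod_ge_0 (c (S m))).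
    assert (0 <= r ^ S m)%R by (apply pow_le; lra).
    nra.
  - apply (ex_series_incr_1 (fun m => Cmod (c m) * (r + 1) ^ m)%R), Hc. lra.
Qed.

Lemma is_series_psum_remainder c w h : entire_coefs c ->
  is_series (fun m => c (S m) * ((w + h) ^ S m - w ^ S m - INR (S m) * h * w ^ m))
            (psum c (w + h) - psum c w - h * psum (deriv_coef c) w).
Proof.
  intros Hc.
  assert (Hdiff : is_series (fun m => c (S m) * (w + h) ^ S m - c (S m) * w ^ S m)
                            (psum c (w + h) - psum c w)).
  { apply (is_series_incr_1 (fun m => c m * (w + h) ^ m - c m * w ^ m)).
    refine (is_series_C_ext _ _ _ _ (fun m => eq_refl) _
              (is_series_minus _ _ _ _ (is_series_psum c (w + h) Hc) (is_series_psum c w Hc))).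
    change plus with Cplus; change opp with Copp; simpl; ring. }
  assert (Hderiv := is_series_scal_l h _ _
                      (is_series_psum (deriv_coef c) w (entire_coefs_deriv c Hc))).
  refine (is_series_C_ext _ _ _ _ _ eq_refl (is_series_minus _ _ _ _ Hdiff Hderiv)).
  intros m. change plus with Cplus. change opp with Copp. change scal with Cmult.
  unfold deriv_coef. simpl. ring.
Qed.

Lemma Cmod_psum_remainder_le c w h : entire_coefs c -> (Cmod h <= 1)%R ->
  (Cmod (psum c (w + h) - psum c w - h * psum (deriv_coef c) w)
   <= Cmod h ^ 2 * Series (fun m => Cmod (c (S m)) * (Cmod w + 1) ^ S m))%R.
Proof.
  intros Hc Hh.
  assert (HK : ex_series (fun m => Cmod (c (S m)) * (Cmod w + 1) ^ S m)%R).
  { apply (ex_series_incr_1 (fun m => Cmod (c m) * (Cmod w + 1) ^ m)%R), Hc.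
    pose proof (Cmod_ge_0 w). lra. }
  refine (is_series_norm_le _ (fun m => Cmod h ^ 2 * (Cmod (c (S m)) * (Cmod w + 1) ^ S m))%R
            _ _ _ (is_series_psum_remainder c w h Hc) _).
  - intros m. change norm with Cmod. rewrite Cmod_mult.
    pose proof (Cmod_pow_succ_remainder_le w h m Hh). pose proof (Cmod_ge_0 (c (S m))). nra.
  - exact (@is_series_scal_l R_AbsRing R_NormedModule (Cmod h ^ 2)%R _ _ (Series_correct _ HK)).
Qed.

Lemma is_derive_psum c w : entire_coefs c ->
  @is_derive C_AbsRing (AbsRing_NormedModule C_AbsRing) (psum c) w (psum (deriv_coef c) w).
Proof.
  intros Hc. split; [apply is_linear_scal_l|].
  intros x Hx. rewrite <- (is_filter_lim_locally_unique _ _ Hx). clear x Hx.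
  intros eps.
  set (K := Series (fun m => Cmod (c (S m)) * (Cmod w + 1) ^ S m)%R).
  pose proof (Rabs_pos K). pose proof (Rle_abs K).
  set (d := Rmin 1 (eps / (Rabs K + 1))).
  assert (Hd : (0 < d)%R).
  { apply Rmin_glb_lt; [lra|]. apply Rdiv_lt_0_compat; [apply cond_pos|lra]. }
  assert (Hd1 : (d <= 1)%R) by apply Rmin_l.
  assert (Hd2 : (d * (Rabs K + 1) <= eps)%R).
  { apply (Rmult_le_reg_r (/ (Rabs K + 1))); [apply Rinv_0_lt_compat; lra|].
    rewrite Rmult_assoc, Rinv_r, Rmult_1_r by lra. apply Rmin_r. }
  eapply filter_imp; [|apply (locally_ball_norm w (mkposreal _ Hd))].
  intros y Hy. unfold ball_norm in Hy. simpl in Hy.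
  change (norm (minus y w)) with (Cmod (y - w)) in *.
  change (norm (minus (minus (psum c y) (psum c w)) (scal (minus y w) (psum (deriv_coef c) w))))
    with (Cmod (psum c y - psum c w - (y - w) * psum (deriv_coef c) w)).
  replace y with (w + (y - w)) at 1 by ring.
  set (h := y - w) in *. clearbody h.
  assert (Hh : (Cmod h <= 1)%R) by lra.
  assert (Hh2 : (Cmod h * (Rabs K + 1) <= eps)%R) by nra.
  pose proof (Cmod_psum_remainder_le c w h Hc Hh) as Hrem. fold K in Hrem.
  pose proof (Cmod_ge_0 h). simpl pow in Hrem. nra.
Qed.

Lemma is_derive_psum_shift c s z : entire_coefs c ->
  @is_derive C_AbsRing (AbsRing_NormedModule C_AbsRing)
    (fun z => psum c (z + s)) z (psum (deriv_coef c) (z + s)).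
Proof.
  intros Hc.
  assert (Hshift : @is_derive C_AbsRing (AbsRing_NormedModule C_AbsRing) (fun z => z + s) z one).
  { rewrite <- (plus_zero_r one). apply (is_derive_plus (fun z => z) (fun _ => s)).
    - apply is_derive_id.
    - apply (@is_derive_const C_AbsRing (AbsRing_NormedModule C_AbsRing)). }
  assert (H := is_derive_comp _ _ z _ _ (is_derive_psum c (z + s) Hc) Hshift).
  rewrite scal_one in H. exact H.
Qed.

(* C carries two normed-module structures over C_AbsRing (C_NormedModule has norm factor
   sqrt 2); both have norm Cmod, so derivatives transfer. *)
Lemma is_derive_C_NormedModule (f : C -> C) z l :
  @is_derive C_AbsRing (AbsRing_NormedModule C_AbsRing) f z l ->
  @is_derive C_AbsRing C_NormedModule f z l.
Proof. intros [_ Hf]. split; [apply is_linear_scal_l|exact Hf]. Qed.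

Lemma entire_coefs_exp_bound c A :
  (forall m, Cmod (c m) <= A ^ m / INR (fact m))%R -> entire_coefs c.
Proof.
  intros Hc r Hr.
  apply (@ex_series_le R_AbsRing R_CompleteNormedModule _ (fun m => (A * r) ^ m / INR (fact m))%R).
  - intros m. change norm with Rabs.
    assert (0 <= r ^ m)%R by (apply pow_le, Hr).
    rewrite Rabs_pos_eq by (apply Rmult_le_pos; [apply Cmod_ge_0|assumption]).
    rewrite Rpow_mult_distr. unfold Rdiv in *.
    specialize (Hc m). apply (Rmult_le_compat_r (r ^ m)) in Hc; [lra|assumption].
  - exists (exp (A * r)). eapply is_series_ext; [|exact (is_exp_Reals (A * r))].
    intros m. simpl. rewrite pow_n_pow. reflexivity.
Qed.

Lemma RtoC_neq0 (x : R) : x <> 0%R -> RtoC x <> 0.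
Proof. intros Hx E. apply Hx. now injection E. Qed.

Lemma poch_succ l m : poch l (S m) = l * poch (l + 1) m.
Proof.
  induction m as [|m IH].
  - simpl. ring.
  - change (poch l (S (S m))) with (poch l (S m) * (l + INR (S m))).
    rewrite IH. simpl poch. rewrite S_INR, RtoC_plus. ring.
Qed.

Lemma Cmod_poch_ge l m : (0 <= Re l)%R -> (Re l ^ m <= Cmod (poch l m))%R.
Proof.
  intros Hl. induction m as [|m IH].
  - simpl. rewrite Cmod_1. lra.
  - simpl poch. rewrite Cmod_mult. simpl pow.
    assert (Hlm : (Re l <= Cmod (l + INR m))%R).
    { eapply Rle_trans; [|apply re_le_Cmod]. eapply Rle_trans; [|apply Rle_abs].
      pose proof (pos_INR m). unfold Re in *. simpl. lra. }
    assert (0 <= Re l ^ m)%R by (apply pow_le; lra).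
    rewrite Rmult_comm. apply Rmult_le_compat; auto.
Qed.

Lemma poch_neq0 l m : (0 < Re l)%R -> poch l m <> 0.
Proof.
  intros Hl. apply Cmod_gt_0. eapply Rlt_le_trans; [|apply Cmod_poch_ge; lra].
  apply pow_lt, Hl.
Qed.

Definition Bcoef (t a : C) (m : nat) : C := / 2 * t ^ m / (INR (fact m) * poch (1 + a) m).

Lemma Bfun_psum t a b z : Bfun t a b z = psum (Bcoef t a) (z - 1) * psum (Bcoef t b) (z + 1).
Proof.
  unfold Bfun, psum. f_equal; apply CSeries_ext; intros m; unfold Bterm, Bcoef, Cdiv; ring.
Qed.

Lemma Cmod_Bcoef_le t a m : (-1 < Re a)%R ->
  (Cmod (Bcoef t a m) <= (Cmod t / Re (1 + a)) ^ m / INR (fact m))%R.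
Proof.
  intros Ha. set (rho := Re (1 + a)).
  assert (Hrho : (0 < rho)%R) by (unfold rho, Re in *; simpl; lra).
  assert (HP := Cmod_poch_ge (1 + a) m (Rlt_le _ _ Hrho)). fold rho in HP.
  assert (Hrhom : (0 < rho ^ m)%R) by (apply pow_lt, Hrho).
  assert (HF : (0 < INR (fact m))%R) by apply INR_fact_lt_0.
  assert (HT : (0 <= Cmod t ^ m)%R) by (apply pow_le, Cmod_ge_0).
  assert (H2 : RtoC 2 <> 0) by (apply RtoC_neq0; lra).
  assert (HFP : RtoC (INR (fact m)) * poch (1 + a) m <> 0)
    by (apply Cmult_neq_0; [apply RtoC_neq0; lra|apply poch_neq0; exact Hrho]).
  unfold Bcoef, Cdiv.
  rewrite !Cmod_mult, (Cmod_inv _ H2), (Cmod_inv _ HFP), Cmod_mult, Cmod_pow, !Cmod_R.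
  rewrite (Rabs_pos_eq 2), (Rabs_pos_eq (INR (fact m))) by lra.
  unfold Rdiv. rewrite Rpow_mult_distr, pow_inv.
  assert (Hinv : (/ (INR (fact m) * Cmod (poch (1 + a) m)) <= / (INR (fact m) * rho ^ m))%R).
  { apply Rinv_le_contravar; [apply Rmult_lt_0_compat|apply Rmult_le_compat_l]; lra. }
  assert (0 <= / (INR (fact m) * Cmod (poch (1 + a) m)))%R
    by (apply Rlt_le, Rinv_0_lt_compat, Rmult_lt_0_compat; lra).
  apply Rle_trans with (Cmod t ^ m * / (INR (fact m) * rho ^ m))%R.
  - nra.
  - right. rewrite Rinv_mult. ring.
Qed.

Lemma entire_coefs_Bcoef t a : (-1 < Re a)%R -> entire_coefs (Bcoef t a).
Proof.
  intros Ha. apply (entire_coefs_exp_bound _ (Cmod t / Re (1 + a))).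
  intros m. now apply Cmod_Bcoef_le.
Qed.

Lemma deriv_coef_Bcoef t a m : (-1 < Re a)%R ->
  deriv_coef (Bcoef t a) m = t / (1 + a) * Bcoef t (1 + a) m.
Proof.
  intros Ha.
  assert (Ha1 : 1 + a <> 0) by (intros E; apply (f_equal Re) in E; unfold Re in *; simpl in *; lra).
  assert (Hp : poch (1 + (1 + a)) m <> 0) by (apply poch_neq0; unfold Re in *; simpl; lra).
  assert (HSm : RtoC (INR (S m)) <> 0) by (apply RtoC_neq0, not_0_INR; lia).
  assert (HF : RtoC (INR (fact m)) <> 0) by (apply RtoC_neq0, INR_fact_neq_0).
  unfold deriv_coef, Bcoef.
  rewrite poch_succ, fact_simpl, mult_INR, RtoC_mult.
  replace (1 + a + 1) with (1 + (1 + a)) by ring.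
  simpl Cpow. field. auto.
Qed.

Lemma psum_deriv_Bcoef t a w : (-1 < Re a)%R ->
  psum (deriv_coef (Bcoef t a)) w = t / (1 + a) * psum (Bcoef t (1 + a)) w.
Proof.
  intros Ha. rewrite <- psum_scal by (apply entire_coefs_Bcoef; unfold Re in *; simpl; lra).
  apply CSeries_ext. intros m. now rewrite deriv_coef_Bcoef.
Qed.

Theorem mainTheorem5 (alpha beta t : C) :
  (Re alpha > -1)%R -> (Re beta > -1)%R ->
  forall z : C, (Cmod z < 1)%R ->
  exists d : C,
    @is_derive C_AbsRing C_NormedModule (Bfun t alpha beta) z d /\
    d - t / (1 + alpha) * Bfun t (1 + alpha) beta z
      - t / (1 + beta) * Bfun t alpha (1 + beta) z = 0.
Proof.
  (* Both factors are entire in z. *)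
  intros Ha Hb z _.
  assert (Hf := is_derive_psum_shift (Bcoef t alpha) (Copp 1) z (entire_coefs_Bcoef t alpha Ha)).
  assert (Hg := is_derive_psum_shift (Bcoef t beta) 1 z (entire_coefs_Bcoef t beta Hb)).
  rewrite psum_deriv_Bcoef in Hf, Hg by assumption.
  eexists; split.
  - apply is_derive_C_NormedModule.
    eapply is_derive_ext; [|exact (is_derive_mult _ _ z _ _ Hf Hg Cmult_comm)].
    intros y. symmetry. apply Bfun_psum.
  - rewrite !Bfun_psum. change plus with Cplus. change mult with Cmult.
    change (z - 1) with (z + Copp 1). ring.
Qed.
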